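(* Let $F\colon[0,1]^*\to\mathbb{R}$ be a standard function such that $F_1$ is strictly increasing (resp. strictly decreasing). Then the following are equivalent: (1) $F$ is preassociative and unarily quasi-range-idempotent, and $F_2$ is symmetric, nondecreasing (resp. nonincreasing) in each argument, and satisfies $F_2(1,x)=F_1(x)$ for every $x\in[0,1]$; (2) there exist a strictly increasing (resp. strictly decreasing) function $f\colon[0,1]\to\mathbb{R}$ and a variadic t-norm $H\colon[0,1]^*\to[0,1]\cup\{\varepsilon\}$ such that $F^{\flat}=f\circ H^{\flat}$. In this case $f=F_1$.
   Context: $X^*=\bigcup_{n\geqslant 0}X^n$ denotes the finite tuples over $X$, $X^0=\{\varepsilon\}$ with $\varepsilon\notin X$ the empty tuple; $F(\mathbf{x},\mathbf{y})$ denotes $F$ applied to the concatenation, concatenation with $\varepsilon$ leaving tuples unchanged. $F_n=F|_{X^n}$, $F^{\flat}=F|_{X^*\setminus\{\varepsilon\}}$. $F$ is standard if $F(\mathbf{x})=F(\varepsilon)$ only for $\mathbf{x}=\varepsilon$. $F$ is preassociative if for all tuples $\mathbf{x},\mathbf{y},\mathbf{y}',\mathbf{z}$, $F(\mathbf{y})=F(\mathbf{y}')$ implies $F(\mathbf{x},\mathbf{y},\mathbf{z})=F(\mathbf{x},\mathbf{y}',\mathbf{z})$. $F$ is unarily quasi-range-idempotent if $\mathrm{ran}(F_1)=\mathrm{ran}(F^{\flat})$. An operation $H\colon X^*\to X\cup\{\varepsilon\}$ is $\varepsilon$-standard if $H(\varepsilon)=\varepsilon$ and $H(\mathbf{x})\neq\varepsilon$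 for $\mathbf{x}\neq\varepsilon$, and associative if $H(\mathbf{x},\mathbf{y},\mathbf{z})=H(\mathbf{x},H(\mathbf{y}),\mathbf{z})$ for all tuples (a value $\varepsilon$ treated as the empty tuple). A t-norm is an operation $T\colon[0,1]^2\to[0,1]$ that is nondecreasing in each argument, symmetric, associative, and satisfies $T(1,x)=x$ for all $x$. A variadic t-norm is an associative $\varepsilon$-standard operation $H\colon[0,1]^*\to[0,1]\cup\{\varepsilon\}$ whose binary part $H_2$ is a t-norm. *)

From Stdlib Require Import Reals List Lra.
Import ListNotations.
Open Scope R_scope.

(* The carrier X = [0,1]. Tuples over X are lists; the empty list is epsilon. *)
Definition I01 : Type := { x : R | 0 <= x <= 1 }.
Definition v (a : I01) : R := proj1_sig a.

Lemma one01_pf : 0 <= 1 <= 1. Proof. lra. Qed.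
Definition one01 : I01 := exist _ 1 one01_pf.

Definition strict_mono_dir (inc : bool) (g : I01 -> R) : Prop :=
  forall a b : I01, v a < v b -> if inc then g a < g b else g b < g a.

Definition weak_mono_dir (inc : bool) (g : I01 -> R) : Prop :=
  forall a b : I01, v a <= v b -> if inc then g a <= g b else g b <= g a.

Definition standard (F : list I01 -> R) : Prop :=
  forall x, F x = F [] -> x = [].

Definition preassociative (F : list I01 -> R) : Prop :=
  forall x y y' z, F y = F y' -> F (x ++ y ++ z) = F (x ++ y' ++ z).

Definition unarily_quasi_range_idempotent (F : list I01 -> R) : Prop :=
  forall r : R, (exists a, F [a] = r) <-> (exists x, x <> [] /\ F x = r).

(* H : X^* -> X ∪ {epsilon}, with None standing for epsilon. *)
Definition eps_standard (H : list I01 -> option I01) : Prop :=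
  H [] = None /\ forall x, x <> [] -> H x <> None.

Definition opt_tuple (o : option I01) : list I01 :=
  match o with Some a => [a] | None => [] end.

Definition associative_var (H : list I01 -> option I01) : Prop :=
  forall x y z, H (x ++ y ++ z) = H (x ++ opt_tuple (H y) ++ z).

Definition is_tnorm (T : I01 -> I01 -> I01) : Prop :=
  (forall a a' b, v a <= v a' -> v (T a b) <= v (T a' b)) /\
  (forall a b b', v b <= v b' -> v (T a b) <= v (T a b')) /\
  (forall a b, T a b = T b a) /\
  (forall a b c, T (T a b) c = T a (T b c)) /\
  (forall a, T one01 a = a).

Definition binary_part_tnorm (H : list I01 -> option I01) : Prop :=
  exists T : I01 -> I01 -> I01, (forall a b, H [a; b] = Some (T a b)) /\ is_tnorm T.

Definition variadic_tnorm (H : list I01 -> option I01) : Prop :=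
  associative_var H /\ eps_standard H /\ binary_part_tnorm H.

Definition cond1 (inc : bool) (F : list I01 -> R) : Prop :=
  preassociative F /\ unarily_quasi_range_idempotent F /\
  (forall a b, F [a; b] = F [b; a]) /\
  (forall b, weak_mono_dir inc (fun a => F [a; b])) /\
  (forall a, weak_mono_dir inc (fun b => F [a; b])) /\
  (forall a, F [one01; a] = F [a]).

Definition factors_through (F : list I01 -> R) (f : I01 -> R)
    (H : list I01 -> option I01) : Prop :=
  forall x, x <> [] -> exists c, H x = Some c /\ F x = f c.

Definition cond2 (inc : bool) (F : list I01 -> R) (f : I01 -> R)
    (H : list I01 -> option I01) : Prop :=
  strict_mono_dir inc f /\ variadic_tnorm H /\ factors_through F f H.

(* If F is unarily quasi-range-idempotent, every nonempty tuple x has a unary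
   representative a with F [a] = F x, unique because F_1 is strictly monotone;
   H x := a is then associative because F is preassociative, and the axioms of
   the t-norm H_2 are read off those of F_2 through F_1.  Conversely, H [a] = a
   follows from associativity and H (1, a) = a, which forces f = F_1; F is then
   preassociative because H is associative and f is injective, standardness of
   F taking care of the empty tuple. *)
From Stdlib Require Import Reals List Lra ClassicalEpsilon ProofIrrelevance.
Import ListNotations.
Open Scope R_scope.

Lemma I01_eq (a b : I01) : v a = v b -> a = b.
Proof.
  destruct a as [x hx], b as [y hy]; unfold v; simpl; intros ->.
  f_equal; apply proof_irrelevance.
Qed.

Section StrictMonotone.

Variables (inc : bool) (g : I01 -> R).
Hypothesis hg : strict_mono_dir inc g.

Lemma strict_mono_dir_inj (a b : I01) : g a = g b -> a = b.
Proof.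
  intros e; apply I01_eq.
  destruct (Rtotal_order (v a) (v b)) as [h|[h|h]]; auto;
    [specialize (hg a b h) | specialize (hg b a h)]; destruct inc; lra.
Qed.

Lemma strict_mono_dir_weak : weak_mono_dir inc g.
Proof.
  intros a b h; destruct (Rle_lt_or_eq_dec _ _ h) as [h'|h'].
  - specialize (hg a b h'); destruct inc; lra.
  - apply I01_eq in h'; subst; destruct inc; lra.
Qed.

Lemma strict_mono_dir_reflect (a b : I01) :
  (if inc then g a <= g b else g b <= g a) -> v a <= v b.
Proof.
  intros h; destruct (Rle_lt_dec (v a) (v b)) as [h'|h']; auto.
  specialize (hg b a h'); destruct inc; lra.
Qed.

End StrictMonotone.

Section FromFactorization.

Variables (F : list I01 -> R) (f : I01 -> R) (H : list I01 -> option I01).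
Hypothesis hfac : factors_through F f H.

Lemma variadic_tnorm_unary : variadic_tnorm H -> forall a, H [a] = Some a.
Proof.
  intros [hass [[_ hne] [T [hT [_ [_ [_ [_ hunit]]]]]]]] a.
  destruct (H [a]) as [c|] eqn:hc; [|exfalso; exact (hne [a] ltac:(discriminate) hc)].
  pose proof (hass [one01] [a] []) as E; simpl in E.
  rewrite hc in E; simpl in E; rewrite !hT, !hunit in E; congruence.
Qed.

Lemma factors_through_unary : variadic_tnorm H -> forall a, f a = F [a].
Proof.
  intros hH a; destruct (hfac [a] ltac:(discriminate)) as [c [hc e]].
  rewrite variadic_tnorm_unary in hc by exact hH; congruence.
Qed.

Lemma factors_through_pair (T : I01 -> I01 -> I01) :
  (forall a b, H [a; b] = Some (T a b)) -> forall a b, F [a; b] = f (T a b).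
Proof.
  intros hT a b; destruct (hfac [a; b] ltac:(discriminate)) as [c [hc e]].
  rewrite hT in hc; congruence.
Qed.

Lemma factors_through_preassociative :
  standard F -> (forall a b, f a = f b -> a = b) -> associative_var H ->
  preassociative F.
Proof.
  intros hstd hinj hass x y y' z e.
  destruct y as [|b y].
  { assert (y' = []) by (apply hstd; auto); subst; reflexivity. }
  destruct y' as [|b' y'].
  { assert (b :: y = []) by (apply hstd; auto); discriminate. }
  destruct (hfac (b :: y) ltac:(discriminate)) as [c [hc ec]].
  destruct (hfac (b' :: y') ltac:(discriminate)) as [c' [hc' ec']].
  assert (c = c') as <- by (apply hinj; congruence).
  assert (EH : H (x ++ (b :: y) ++ z) = H (x ++ (b' :: y') ++ z))
    by (rewrite hass, hc, (hass x (b' :: y') z), hc'; reflexivity).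
  destruct (hfac (x ++ (b :: y) ++ z)) as [d [hd ed]]; [destruct x; discriminate|].
  destruct (hfac (x ++ (b' :: y') ++ z)) as [d' [hd' ed']]; [destruct x; discriminate|].
  congruence.
Qed.

Lemma factors_through_uqri :
  (forall a, f a = F [a]) -> unarily_quasi_range_idempotent F.
Proof.
  intros hf1 r; split.
  - intros [a e]; exists [a]; split; [discriminate | exact e].
  - intros [x [hx e]]; destruct (hfac x hx) as [c [_ ec]].
    exists c; rewrite <- hf1; congruence.
Qed.

End FromFactorization.

Lemma cond2_cond1 (inc : bool) (F : list I01 -> R) (f : I01 -> R)
  (H : list I01 -> option I01) :
  standard F -> cond2 inc F f H -> cond1 inc F.
Proof.
  intros hstd [hf [hH hfac]].
  pose proof (factors_through_unary _ _ _ hfac hH) as hf1.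
  destruct hH as [hass [_ [T [hT [m1 [m2 [sym [_ hunit]]]]]]]].
  pose proof (factors_through_pair _ _ _ hfac T hT) as hFT.
  split; [|split; [|split; [|split; [|split]]]].
  - exact (factors_through_preassociative _ _ _ hfac hstd
             (strict_mono_dir_inj _ _ hf) hass).
  - exact (factors_through_uqri _ _ _ hfac hf1).
  - intros a b; rewrite !hFT, sym; reflexivity.
  - intros b a a' h; simpl; rewrite !hFT.
    apply (strict_mono_dir_weak _ _ hf); apply m1, h.
  - intros a b b' h; simpl; rewrite !hFT.
    apply (strict_mono_dir_weak _ _ hf); apply m2, h.
  - intros a; rewrite hFT, hunit; apply hf1.
Qed.

Definition unary_repr (F : list I01 -> R) (x : list I01) : I01 :=
  epsilon (inhabits one01) (fun a => F [a] = F x).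

Definition unary_repr_op (F : list I01 -> R) (x : list I01) : option I01 :=
  match x with [] => None | _ => Some (unary_repr F x) end.

Section ToFactorization.

Variables (inc : bool) (F : list I01 -> R).
Hypothesis hF1 : strict_mono_dir inc (fun a => F [a]).
Hypothesis hq : unarily_quasi_range_idempotent F.

Lemma unary_repr_spec (x : list I01) : x <> [] -> F [unary_repr F x] = F x.
Proof.
  intros hx; unfold unary_repr; apply epsilon_spec.
  apply (proj2 (hq (F x))); exists x; auto.
Qed.

Lemma unary_repr_op_nonempty (x : list I01) :
  x <> [] -> unary_repr_op F x = Some (unary_repr F x).
Proof. destruct x; [congruence | reflexivity]. Qed.

Lemma unary_repr_op_eps_standard : eps_standard (unary_repr_op F).
Proof. split; [reflexivity | intros [|a x] h; [congruence | discriminate]]. Qed.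

Lemma unary_repr_op_factors : factors_through F (fun a => F [a]) (unary_repr_op F).
Proof.
  intros x hx; exists (unary_repr F x); split.
  - exact (unary_repr_op_nonempty x hx).
  - symmetry; exact (unary_repr_spec x hx).
Qed.

Lemma unary_repr_op_associative :
  preassociative F -> associative_var (unary_repr_op F).
Proof.
  intros hp x [|b y] z; [reflexivity|]; simpl opt_tuple.
  rewrite !unary_repr_op_nonempty by (destruct x; discriminate).
  f_equal; apply (strict_mono_dir_inj _ _ hF1).
  rewrite !unary_repr_spec by (destruct x; discriminate).
  apply hp; symmetry; apply unary_repr_spec; discriminate.
Qed.

Lemma unary_repr_pair_tnorm :
  cond1 inc F -> is_tnorm (fun a b => unary_repr F [a; b]).
Proof.
  intros [hp [_ [hsym [hm1 [hm2 hunit]]]]].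
  assert (hT : forall a b, F [unary_repr F [a; b]] = F [a; b])
    by (intros; apply unary_repr_spec; discriminate).
  assert (inj := strict_mono_dir_inj _ _ hF1).
  split; [|split; [|split; [|split]]].
  - intros a a' b h; apply (strict_mono_dir_reflect _ _ hF1); simpl.
    rewrite !hT; apply (hm1 b a a' h).
  - intros a b b' h; apply (strict_mono_dir_reflect _ _ hF1); simpl.
    rewrite !hT; apply (hm2 a b b' h).
  - intros a b; apply inj; rewrite !hT; apply hsym.
  - intros a b c; apply inj; rewrite !hT.
    pose proof (hp [] [a; b] [unary_repr F [a; b]] [c] (eq_sym (hT a b))) as E1.
    pose proof (hp [a] [b; c] [unary_repr F [b; c]] [] (eq_sym (hT b c))) as E2.
    simpl in E1, E2; congruence.
  - intros a; apply inj; rewrite hT; apply hunit.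
Qed.

End ToFactorization.

Lemma cond1_cond2 (inc : bool) (F : list I01 -> R) :
  strict_mono_dir inc (fun a => F [a]) -> cond1 inc F ->
  cond2 inc F (fun a => F [a]) (unary_repr_op F).
Proof.
  intros hF1 h1; pose proof h1 as [hp [hq _]].
  split; [exact hF1 | split; [split; [|split] | exact (unary_repr_op_factors F hq)]].
  - exact (unary_repr_op_associative _ _ hF1 hq hp).
  - exact (unary_repr_op_eps_standard F).
  - exists (fun a b => unary_repr F [a; b]); split; [reflexivity|].
    exact (unary_repr_pair_tnorm _ _ hF1 hq h1).
Qed.

Theorem theorem5p3 (inc : bool) (F : list I01 -> R)
  (hstd : standard F) (hF1 : strict_mono_dir inc (fun a => F [a])) :
  (cond1 inc F <-> exists (f : I01 -> R) (H : list I01 -> option I01), cond2 inc F f H) /\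
  (forall (f : I01 -> R) (H : list I01 -> option I01), cond2 inc F f H ->
     forall a, f a = F [a]).
Proof.
  split; [split|].
  - intros h1; exists (fun a => F [a]), (unary_repr_op F).
    exact (cond1_cond2 _ _ hF1 h1).
  - intros [f [H h2]]; exact (cond2_cond1 _ _ _ _ hstd h2).
  - intros f H [_ [hH hfac]]; exact (factors_through_unary _ _ _ hfac hH).
Qed.
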